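(* Let $n\ge 2$ and let $\{A,B\}$ be a partition of $[n]=\{1,\dots,n\}$ into two nonempty sets. For any $n$-qubit pure state of the product form $\ket{\psi}=\ket{\psi_A}\otimes\ket{\psi_B}$, where $\ket{\psi_A}$ is a pure state on the qubits in $A$ and $\ket{\psi_B}$ a pure state on the qubits in $B$, $$\mathcal{C}(\ket{\psi})=\mathcal{C}(\ket{\psi_A})+\mathcal{C}(\ket{\psi_B})-\mathcal{C}(\ket{\psi_A})\,\mathcal{C}(\ket{\psi_B}).$$
   Context: For an $m$-qubit pure state $\ket{\phi}$ with qubits labelled by a set $S$ ($|S|=m$), the concentratable entanglement is $\mathcal{C}(\ket{\phi})=1-\frac{1}{2^{m}}\sum_{\alpha\subseteq S}\mathrm{Tr}[\rho_\alpha^2]$, where $\rho_\alpha$ is the reduced density matrix of $\ket{\phi}\!\bra{\phi}$ on the qubits in $\alpha$, with the convention $\mathrm{Tr}[\rho_\emptyset^2]=1$. *)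

From HB Require Import structures.
From mathcomp Require Import all_boot all_order all_algebra.
From mathcomp Require Import complex.
Set Implicit Arguments. Unset Strict Implicit. Unset Printing Implicit Defensive.
Import Order.TTheory GRing.Theory Num.Theory.
Local Open Scope ring_scope.

(* Qubits are labelled by the elements of a finite type T (the set S).
   A computational basis configuration is a function T -> bool, and a
   (not necessarily normalized) vector of the 2^|T|-dimensional Hilbert
   space is a function from configurations to complex amplitudes. *)
Definition config (T : finType) := {ffun T -> bool}.
Definition qstate (R : rcfType) (T : finType) := config T -> R[i].

Definition normalized (R : rcfType) (T : finType) (psi : qstate R T) : Prop :=
  \sum_(x : config T) psi x * (psi x)^* = 1.

Definition sub (T : finType) (alpha : {set T}) := {i : T | i \in alpha}.

Definition glue (T : finType) (alpha : {set T})
  (a : config (sub alpha)) (b : config (sub (~: alpha))) : config T :=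
  [ffun i => match insub i : option (sub alpha) with
             | Some j => a j
             | None => match insub i : option (sub (~: alpha)) with
                       | Some k => b k
                       | None => false
                       end
             end].

(* Reduced density matrix rho_alpha = Tr_{complement}( |psi><psi| ),
   indexed by configurations of the qubits in alpha. *)
Definition rdm (R : rcfType) (T : finType) (psi : qstate R T) (alpha : {set T})
  (a a' : config (sub alpha)) : R[i] :=
  \sum_(b : config (sub (~: alpha))) psi (glue a b) * (psi (glue a' b))^*.

(* Tr[rho_alpha^2], with the convention Tr[rho_emptyset^2] = 1. *)
Definition purity (R : rcfType) (T : finType) (psi : qstate R T) (alpha : {set T}) : R[i] :=
  if alpha == set0 then 1
  else \sum_(a : config (sub alpha)) \sum_(a' : config (sub alpha))
         rdm psi a a' * rdm psi a' a.

Definition conc_ent (R : rcfType) (T : finType) (psi : qstate R T) : R[i] :=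
  1 - (2 ^+ #|T|)^-1 * \sum_(alpha : {set T}) purity psi alpha.

Definition restr (T : finType) (A : {set T}) (x : config T) : config (sub A) :=
  [ffun j => x (val j)].

Definition prod_state (R : rcfType) (T : finType) (A : {set T})
  (psiA : qstate R (sub A)) (psiB : qstate R (sub (~: A))) : qstate R T :=
  fun x => psiA (restr A x) * psiB (restr (~: A) x).

(* Tr[rho_alpha^2] equals the expectation of the swap of the alpha-qubits
   between two copies of psi, i.e. the sum over x, y of
   psi x psi y conj(psi x') conj(psi y'), where x', y' arise from x, y by
   exchanging their alpha-parts.  For a product state this expression splits
   into the A-part and the B-part, so Tr[rho_alpha^2] is the product of the
   purities of psi_A and psi_B on alpha /\ A and alpha /\ B.  Summing over
   alpha therefore factorizes and, as 2^n = 2^|A| 2^|B|,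
   1 - C = (1 - C_A)(1 - C_B). *)
From HB Require Import structures.
From mathcomp Require Import all_boot all_order all_algebra.
From mathcomp Require Import complex.
From mathcomp Require Import ring.
Import Order.TTheory GRing.Theory Num.Theory.
Local Open Scope ring_scope.

Set Implicit Arguments.
Unset Strict Implicit.

Section Configurations.
Variables (T : finType) (al : {set T}).

Definition splice (x y : config T) : config T :=
  [ffun i => if i \in al then x i else y i].

Definition restr_set (be : {set T}) : {set sub al} := [set j | val j \in be].

Lemma glue_val_in (a : config (sub al)) (b : config (sub (~: al))) (j : sub al) :
  glue a b (val j) = a j.
Proof. by rewrite /glue ffunE valK. Qed.

Lemma glue_val_out (a : config (sub al)) (b : config (sub (~: al)))
    (k : sub (~: al)) :
  glue a b (val k) = b k.
Proof. by rewrite /glue ffunE insubN ?valK //; have := valP k; rewrite inE. Qed.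

Lemma restr_glue_in (a : config (sub al)) (b : config (sub (~: al))) :
  restr al (glue a b) = a.
Proof. by apply/ffunP => j; rewrite ffunE glue_val_in. Qed.

Lemma restr_glue_out (a : config (sub al)) (b : config (sub (~: al))) :
  restr (~: al) (glue a b) = b.
Proof. by apply/ffunP => j; rewrite ffunE glue_val_out. Qed.

Lemma glue_restr (x : config T) : glue (restr al x) (restr (~: al) x) = x.
Proof.
apply/ffunP => i; rewrite /glue ffunE.
case: insubP => [j _ <-|i_out]; first by rewrite ffunE.
case: insubP => [k _ <-|]; first by rewrite ffunE.
by rewrite inE i_out.
Qed.

Lemma sum_glue (V : nmodType) (F : config T -> V) :
  \sum_(x : config T) F x =
  \sum_(a : config (sub al)) \sum_(b : config (sub (~: al))) F (glue a b).
Proof.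
rewrite pair_big /=.
rewrite (reindex (fun p : config (sub al) * config (sub (~: al)) => glue p.1 p.2)) //=.
exists (fun x => (restr al x, restr (~: al) x)) => [[a b] _|x _] /=.
  by rewrite restr_glue_in restr_glue_out.
by rewrite glue_restr.
Qed.

Lemma splice_glue (a a' : config (sub al)) (b b' : config (sub (~: al))) :
  splice (glue a b) (glue a' b') = glue a b'.
Proof.
apply/ffunP => i; rewrite /splice /glue !ffunE.
case: insubP => [j -> _|i_out] //.
by rewrite (negbTE i_out).
Qed.

End Configurations.

Lemma restr_splice (T : finType) (A al : {set T}) (x y : config T) :
  restr A (splice al x y) = splice (restr_set A al) (restr A x) (restr A y).
Proof. by apply/ffunP => j; rewrite !ffunE inE. Qed.

Lemma sum_set_config (V : nmodType) (T : finType) (F : {set T} -> V) :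
  \sum_(al : {set T}) F al = \sum_(x : config T) F [set i | x i].
Proof.
rewrite (reindex (fun x : config T => [set i | x i])) //=.
exists (fun al : {set T} => [ffun i => i \in al] : config T) => [x _|al _].
  by apply/ffunP => i; rewrite ffunE inE.
by apply/setP => i; rewrite inE ffunE.
Qed.

Lemma sum_set_split (V : nmodType) (T : finType) (A : {set T})
    (F : {set sub A} -> {set sub (~: A)} -> V) :
  \sum_(al : {set T}) F (restr_set A al) (restr_set (~: A) al) =
  \sum_(be : {set sub A}) \sum_(ga : {set sub (~: A)}) F be ga.
Proof.
rewrite sum_set_config (sum_glue A) sum_set_config.
apply: eq_bigr => a _; rewrite sum_set_config.
apply: eq_bigr => b _; congr F; apply/setP => j; rewrite !inE.
  by rewrite glue_val_in.
by rewrite glue_val_out.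
Qed.

Lemma card_sub_setC (T : finType) (A : {set T}) :
  (#|{: sub A}| + #|{: sub (~: A)}|)%N = #|T|.
Proof. by rewrite !card_sig -(cardsC A); congr (_ + _)%N; apply: eq_card. Qed.

Section SwapOverlap.
Variables (R : rcfType) (T : finType).
Implicit Types (psi : qstate R T) (al : {set T}).

Definition swap_overlap psi al : R[i] :=
  \sum_(x : config T) \sum_(y : config T)
    psi x * psi y * (psi (splice al y x))^* * (psi (splice al x y))^*.

Lemma purity_swap_overlap_neq0 psi al :
  al != set0 -> purity psi al = swap_overlap psi al.
Proof.
move=> al_neq0; rewrite /purity (negbTE al_neq0) /swap_overlap /rdm (sum_glue al).
apply: eq_bigr => a _; under [RHS]eq_bigr do rewrite (sum_glue al).
rewrite [RHS]exchange_big /=.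
apply: eq_bigr => a' _; rewrite big_distrlr /=.
apply: eq_bigr => b _; apply: eq_bigr => b' _.
by rewrite !splice_glue; ring.
Qed.

Lemma swap_overlap_set0 psi :
  normalized psi -> swap_overlap psi set0 = 1.
Proof.
move=> psi_norm; rewrite /swap_overlap.
have splice0 x y : splice set0 x y = y by apply/ffunP => i; rewrite ffunE inE.
rewrite -[1]mulr1 -{1}psi_norm -{1}psi_norm big_distrlr /=.
by apply: eq_bigr => x _; apply: eq_bigr => y _; rewrite !splice0; ring.
Qed.

Lemma purity_swap_overlap psi al :
  normalized psi -> purity psi al = swap_overlap psi al.
Proof.
move=> psi_norm; have [->|al_neq0] := eqVneq al set0.
  by rewrite swap_overlap_set0 // /purity eqxx.
exact: purity_swap_overlap_neq0.
Qed.

End SwapOverlap.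

Section ProductState.
Variables (R : rcfType) (T : finType) (A : {set T}).
Variables (psiA : qstate R (sub A)) (psiB : qstate R (sub (~: A))).

Lemma normalized_prod_state :
  normalized psiA -> normalized psiB -> normalized (prod_state psiA psiB).
Proof.
move=> psiA_norm psiB_norm; rewrite /normalized /prod_state (sum_glue A).
rewrite -[1]mulr1 -{1}psiA_norm -psiB_norm big_distrlr /=.
apply: eq_bigr => a _; apply: eq_bigr => b _.
by rewrite restr_glue_in restr_glue_out rmorphM /=; ring.
Qed.

Lemma swap_overlap_prod_state (al : {set T}) :
  swap_overlap (prod_state psiA psiB) al =
  swap_overlap psiA (restr_set A al) * swap_overlap psiB (restr_set (~: A) al).
Proof.
rewrite /swap_overlap /prod_state (sum_glue A) big_distrl /=.
apply: eq_bigr => a _; rewrite big_distrl exchange_big (sum_glue A) /=.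
apply: eq_bigr => a' _; rewrite exchange_big big_distrr /=.
apply: eq_bigr => b _; rewrite big_distrr /=.
apply: eq_bigr => b' _.
by rewrite !restr_splice !restr_glue_in !restr_glue_out !rmorphM /=; ring.
Qed.

Hypotheses (psiA_norm : normalized psiA) (psiB_norm : normalized psiB).

Lemma purity_prod_state (al : {set T}) :
  purity (prod_state psiA psiB) al =
  purity psiA (restr_set A al) * purity psiB (restr_set (~: A) al).
Proof.
have prod_norm := normalized_prod_state psiA_norm psiB_norm.
by rewrite !purity_swap_overlap // swap_overlap_prod_state.
Qed.

Lemma one_sub_conc_ent_prod_state :
  1 - conc_ent (prod_state psiA psiB) = (1 - conc_ent psiA) * (1 - conc_ent psiB).
Proof.
rewrite /conc_ent !subKr.
under eq_bigr do rewrite purity_prod_state.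
rewrite (sum_set_split (fun be ga => purity psiA be * purity psiB ga)).
rewrite -big_distrlr /= -(card_sub_setC A) exprD invfM.
(* Naming the powers of 2 keeps [ring] from unfolding the cardinalities. *)
set cA := 2 ^- _; set cB := 2 ^- _.
ring.
Qed.

Lemma conc_ent_prod_state :
  conc_ent (prod_state psiA psiB) =
    conc_ent psiA + conc_ent psiB - conc_ent psiA * conc_ent psiB.
Proof.
have := one_sub_conc_ent_prod_state.
move/(congr1 (fun z => 1 - z)); rewrite subKr => ->.
ring.
Qed.

End ProductState.

Theorem proposition1 (R : rcfType) (n : nat) (A : {set 'I_n})
  (psiA : qstate R (sub A)) (psiB : qstate R (sub (~: A))) :
  (2 <= n)%N -> A != set0 -> ~: A != set0 ->
  normalized psiA -> normalized psiB ->
  conc_ent (prod_state psiA psiB) =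
    conc_ent psiA + conc_ent psiB - conc_ent psiA * conc_ent psiB.
Proof. by move=> _ _ _; exact: conc_ent_prod_state. Qed.
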